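(* Let $F=\{\mathbf{p}_0,\ldots,\mathbf{p}_n\}\subset\mathbb{R}^d$ be not contained in any $(d-1)$-dimensional affine subspace, $\lambda\in(0,1)$, $S_i(\mathbf{x})=\lambda\mathbf{x}+(1-\lambda)\mathbf{p}_i$ with attractor $X$. If $\mathbf{a}\in\mathcal{D}^{\mathbb{N}}$ is a universal coding of $\mathbf{x}\in X$, then the set $\{T_{a_1\cdots a_j}(\mathbf{x}):j\ge1\}$ is dense in $X$.
   Context: $\mathcal{D}=\{0,\ldots,n\}$. $X$ is the unique non-empty compact set with $X=\bigcup_{i\in\mathcal{D}}S_i(X)$. The coding map is $\pi(\mathbf{a})=\lim_{j\to\infty}(S_{a_1}\circ\cdots\circ S_{a_j})(\mathbf{0})$; $\mathbf{a}$ is a coding of $\mathbf{x}$ if $\pi(\mathbf{a})=\mathbf{x}$. A sequence is universal if it contains every finite word over $\mathcal{D}$ as a block of consecutive digits. $T_i(\mathbf{x})=\frac{\mathbf{x}-(1-\lambda)\mathbf{p}_i}{\lambda}$ is the inverse of $S_i$, and $T_{a_1\cdots a_j}=T_{a_j}\circ\cdots\circ T_{a_1}$. *)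

From HB Require Import structures.
From mathcomp Require Import all_boot all_order all_algebra.
From mathcomp Require Import all_classical all_reals all_analysis.
Set Implicit Arguments. Unset Strict Implicit. Unset Printing Implicit Defensive.
Import Order.TTheory GRing.Theory Num.Theory.
Import numFieldNormedType.Exports.
Local Open Scope classical_set_scope.
Local Open Scope ring_scope.

(* Points of R^d are row vectors 'rV[R]_d; digits D = {0..n} are 'I_n.+1;
   a sequence a in D^N is a : nat -> 'I_n.+1 with a 0 = a_1, a 1 = a_2, ... *)

Definition Smap (R : realType) (d n : nat) (p : 'I_n.+1 -> 'rV[R]_d)
  (lam : R) (i : 'I_n.+1) (x : 'rV[R]_d) : 'rV[R]_d :=
  lam *: x + (1 - lam) *: p i.

Definition Tmap (R : realType) (d n : nat) (p : 'I_n.+1 -> 'rV[R]_d)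
  (lam : R) (i : 'I_n.+1) (x : 'rV[R]_d) : 'rV[R]_d :=
  lam^-1 *: (x - (1 - lam) *: p i).

Definition Sword (R : realType) (d n : nat) (p : 'I_n.+1 -> 'rV[R]_d)
  (lam : R) (a : nat -> 'I_n.+1) (j : nat) (y : 'rV[R]_d) : 'rV[R]_d :=
  foldr (fun k z => Smap p lam (a k) z) y (iota 0 j).

Definition Tword (R : realType) (d n : nat) (p : 'I_n.+1 -> 'rV[R]_d)
  (lam : R) (a : nat -> 'I_n.+1) (j : nat) (x : 'rV[R]_d) : 'rV[R]_d :=
  foldl (fun z k => Tmap p lam (a k) z) x (iota 0 j).

Definition is_coding (R : realType) (d n : nat) (p : 'I_n.+1 -> 'rV[R]_d)
  (lam : R) (a : nat -> 'I_n.+1) (x : 'rV[R]_d) : Prop :=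
  (fun j => Sword p lam a j 0) @ \oo --> x.

Definition universal (n : nat) (a : nat -> 'I_n.+1) : Prop :=
  forall w : seq 'I_n.+1, exists k : nat,
    forall i : nat, (i < size w)%N -> a (k + i)%N = nth ord0 w i.

Definition is_attractor (R : realType) (d n : nat) (p : 'I_n.+1 -> 'rV[R]_d)
  (lam : R) (X : set 'rV[R]_d) : Prop :=
  X !=set0 /\ compact X /\ X = \bigcup_(i in [set: 'I_n.+1]) (Smap p lam i @` X).

Definition not_in_hyperplane (R : realType) (d n : nat) (p : 'I_n.+1 -> 'rV[R]_d)
  : Prop :=
  forall (v : 'rV[R]_d) (W : 'M[R]_d), \rank W = d.-1 ->
    ~ (forall i : 'I_n.+1, (p i - v <= W)%MS).

From HB Require Import structures.
From mathcomp Require Import all_boot all_order all_algebra.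
From mathcomp Require Import all_classical all_reals all_analysis.
Import Order.TTheory GRing.Theory Num.Theory.
Import numFieldNormedType.Exports.
Local Open Scope classical_set_scope.
Local Open Scope ring_scope.

(* Every composite S_w = S_(w_1) o ... o S_(w_k) shrinks distances exactly by
   lambda^k, and every z in X lies in a piece S_w(X) with |w| = k, for any k.
   The universal sequence a contains w starting at a position m + 1 > 1, and
   then T_(a_1 ... a_m)(x) = S_w(y) with y = T_(a_1 ... a_(m+k))(x). The point y
   lies in X because it is coded by a shifted sequence and X is closed, so
   T_(a_1 ... a_m)(x) is within lambda^k diam X of z. *)

Set Implicit Arguments.
Unset Strict Implicit.

Lemma closure_approx (R : realType) (V : normedModType R) (A : set V) (z : V) :
  (forall e : R, 0 < e -> exists y, A y /\ `|z - y| < e) -> closure A z.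
Proof.
move=> approx B /nbhs_ballP [e /= e0 zeB]; have [y [Ay zy]] := approx e e0.
by exists y; split => //; apply: zeB; rewrite -ball_normE.
Qed.

Lemma compact_dist_bounded (R : realType) (V : normedModType R) (A : set V) :
  compact A -> exists2 M : R, 0 < M & forall y z, A y -> A z -> `|y - z| <= M.
Proof.
move=> /compact_bounded [M [_ HM]].
have normA y : A y -> `|y| <= `|M| + 1.
  by apply: HM; rewrite (le_lt_trans (ler_norm M)) // ltrDl.
exists ((`|M| + 1) *+ 2) => [|y z Ay Az]; first by rewrite pmulrn_lgt0 // ltr_wpDl.
by rewrite (le_trans (ler_normB _ _)) // mulr2n lerD ?normA.
Qed.

Section WordMaps.
Variables (R : realType) (d n : nat) (p : 'I_n.+1 -> 'rV[R]_d) (lam : R).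

Definition Sseq (s : seq 'I_n.+1) (y : 'rV[R]_d) : 'rV[R]_d :=
  foldr (Smap p lam) y s.

Definition Tseq (s : seq 'I_n.+1) (y : 'rV[R]_d) : 'rV[R]_d :=
  foldl (fun z i => Tmap p lam i z) y s.

Lemma Sword_Sseq a j : Sword p lam a j =1 Sseq (map a (iota 0 j)).
Proof. by move=> y; rewrite /Sword /Sseq foldr_map. Qed.

Lemma Tword_Tseq a j : Tword p lam a j =1 Tseq (map a (iota 0 j)).
Proof. by move=> y; rewrite /Tword /Tseq; elim: (iota 0 j) y => //= k s IH y. Qed.

Lemma Sseq_cat s t y : Sseq (s ++ t) y = Sseq s (Sseq t y).
Proof. exact: foldr_cat. Qed.

Lemma Tseq_cat s t y : Tseq (s ++ t) y = Tseq t (Tseq s y).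
Proof. exact: foldl_cat. Qed.

Lemma SseqB s u v : Sseq s u - Sseq s v = lam ^+ size s *: (u - v).
Proof.
elim: s => [|i s IH] /=; first by rewrite scale1r.
rewrite /Smap opprD addrACA subrr addr0 -scalerBr IH.
by rewrite scalerA exprS.
Qed.

Lemma Sword_shift a j k y :
  Sword p lam a (j + k) y =
  Sseq (map a (iota 0 j)) (Sword p lam (fun i => a (j + i)%N) k y).
Proof.
rewrite !Sword_Sseq iotaD map_cat Sseq_cat add0n.
by have := iotaDl j 0 k; rewrite addn0 => ->; rewrite -map_comp.
Qed.

Lemma attractor_Sseq X s y :
  is_attractor p lam X -> X y -> X (Sseq s y).
Proof.
move=> [_ [_ XE]] Xy; elim: s => //= i s IH.
by rewrite XE; exists i => //; exists (Sseq s y).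
Qed.

Lemma attractor_Sseq_decomp X k z : is_attractor p lam X -> X z ->
  exists w zk, [/\ size w = k, X zk & z = Sseq w zk].
Proof.
move=> HX; elim: k z => [|k IH] z Xz; first by exists [::], z.
have [_ [_ XE]] := HX; move: Xz; rewrite {1}XE => -[i _ [z1 Xz1 <-]].
have [w [zk [sw Xzk ->]]] := IH z1 Xz1.
by exists (i :: w), zk; rewrite /= sw.
Qed.

Hypothesis lam_neq0 : lam != 0.

Lemma SmapK i : cancel (Tmap p lam i) (Smap p lam i).
Proof. by move=> y; rewrite /Tmap /Smap scalerA divff // scale1r subrK. Qed.

Lemma TseqK s : cancel (Tseq s) (Sseq s).
Proof. by elim: s => [|i s IH] y //=; rewrite IH SmapK. Qed.

Lemma Sseq_unscale s u : lam ^- size s *: (Sseq s u - Sseq s 0) = u.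
Proof. by rewrite SseqB subr0 scalerA mulVf ?scale1r // expf_neq0. Qed.

Lemma Tword_block a m w x : map a (iota m (size w)) = w ->
  Tword p lam a m x = Sseq w (Tword p lam a (m + size w) x).
Proof.
by move=> aw; rewrite !Tword_Tseq iotaD map_cat Tseq_cat add0n aw TseqK.
Qed.

End WordMaps.

Lemma universal_block n (a : nat -> 'I_n.+1) (w : seq 'I_n.+1) :
  universal a -> exists m, map a (iota m.+1 (size w)) = w.
Proof.
move=> /(_ (ord0 :: w)) [m aw]; exists m.
apply: (@eq_from_nth _ ord0) => [|i]; rewrite size_map size_iota // => iw.
by rewrite (nth_map 0%N) ?size_iota // nth_iota // addSnnS; apply: aw.
Qed.

Section Codings.
Variables (R : realType) (d n : nat) (p : 'I_n.+1 -> 'rV[R]_d) (lam : R).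
Variable X : set 'rV[R]_d.
Hypotheses (lam_gt0 : 0 < lam) (lam_lt1 : lam < 1).
Hypothesis attrX : is_attractor p lam X.

Lemma cvg_lam_expr : lam ^+ k @[k --> \oo] --> 0.
Proof. by apply: cvg_expr; rewrite gtr0_norm. Qed.

Lemma coding_mem_attractor a x : is_coding p lam a x -> X x.
Proof.
move=> ax; have [y0 Xy0] := attrX.1.
have closedX : closed X := compact_closed (@norm_hausdorff _ _) attrX.2.1.
apply: (@closed_cvg nat _ \oo _ (fun k => Sword p lam a k y0) _ closedX).
  by apply: filterE => k; rewrite Sword_Sseq; apply: attractor_Sseq.
have -> : (fun k => Sword p lam a k y0) = fun k => Sword p lam a k 0 + lam ^+ k *: y0.
  apply: funext => k; rewrite -[LHS](subrK (Sword p lam a k 0)) addrC !Sword_Sseq.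
  by rewrite SseqB subr0 size_map size_iota.
rewrite -[x]addr0 -[X in x + X](scale0r y0).
by apply: cvgD => //; exact: cvgZr_tmp cvg_lam_expr.
Qed.

Lemma is_coding_shift a x j : is_coding p lam a x ->
  is_coding p lam (fun k => a (j + k)%N) (Tword p lam a j x).
Proof.
move=> ax; rewrite /is_coding; have lam_neq0 : lam != 0 by rewrite gt_eqF.
set s := map a (iota 0 j).
have -> : (fun k => Sword p lam (fun i => a (j + i)%N) k 0) =
          fun k => lam ^- size s *: (Sword p lam a (k + j) 0 - Sseq p lam s 0).
  by apply: funext => k; rewrite addnC Sword_shift Sseq_unscale.
rewrite Tword_Tseq -[X in _ --> X](Sseq_unscale p lam_neq0 s) TseqK //.
apply: cvgZl_tmp; apply: cvgB; last exact: cvg_cst.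
by move: ax; rewrite /is_coding -(cvg_shiftn j); apply.
Qed.

End Codings.

Unset Implicit Arguments.

Theorem lemma5p1 (R : realType) (d n : nat) (p : 'I_n.+1 -> 'rV[R]_d)
  (lam : R) (X : set 'rV[R]_d) (a : nat -> 'I_n.+1) (x : 'rV[R]_d) :
  not_in_hyperplane p ->
  0 < lam < 1 ->
  is_attractor p lam X ->
  x \in X ->
  is_coding p lam a x ->
  universal a ->
  [set Tword p lam a j x | j in [set j : nat | (1 <= j)%N]] `<=` X /\
  X `<=` closure [set Tword p lam a j x | j in [set j : nat | (1 <= j)%N]].
Proof.
move=> _ /andP[lam_gt0 lam_lt1] attrX _ ax univ.
have lam_neq0 : lam != 0 by rewrite gt_eqF.
have Tword_mem j : X (Tword p lam a j x).
  by apply: (coding_mem_attractor lam_gt0 lam_lt1 attrX); exact: is_coding_shift.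
split; first by move=> _ [j _ <-].
move=> z Xz; apply: closure_approx => e e_gt0.
have [M M_gt0 diamX] := compact_dist_bounded attrX.2.1.
have [N _ /(_ N (leqnn N)) /= lamN] :=
  cvgr_lt _ (cvg_lam_expr lam_gt0 lam_lt1) _ (divr_gt0 e_gt0 M_gt0).
have [w [zk [sizew Xzk ->]]] := attractor_Sseq_decomp N attrX Xz.
have [m aw] := universal_block w univ.
exists (Tword p lam a m.+1 x); split; first by exists m.+1.
rewrite (Tword_block p lam_neq0 _ aw) SseqB normrZ ger0_norm ?exprn_ge0 ?ltW // sizew.
rewrite (le_lt_trans (ler_wpM2l _ (diamX _ _ Xzk (Tword_mem _)))) ?exprn_ge0 ?ltW //.
by rewrite -ltr_pdivlMr.
Qed.
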